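(* Let $\sigma$ be a primitive substitution of constant length $\ell$ (i.e. $|\sigma(a)|=\ell$ for all $a$) over an alphabet $\mathcal{A}$ of cardinality $d$, such that its substitution matrix $M_\sigma$ is symmetric and either $d$ is coprime with $\ell$, or there exists $N$ such that $d$ does not divide $\ell^n$ for all $n\ge N$. If there exist a letter $a$ and a nonempty return word $w$ to $a$ such that $d$ is coprime with $|w|$, then $(X_\sigma,T)$ is not balanced on letters.
   Context: $\sigma$ is a non-erasing morphism of $\mathcal{A}^*$; $M_\sigma(a,b)=|\sigma(b)|_a$; primitive means some power of $M_\sigma$ is positive. $X_\sigma$ is the set of $x\in\mathcal{A}^{\mathbb Z}$ all of whose finite factors are factors of some $\sigma^n(a)$, $T$ the shift, $\mathcal{L}(X_\sigma)$ its set of finite factors. A return word to the letter $a$ is a word $w$ with $wa\in\mathcal{L}(X_\sigma)$ and $a$ a prefix of $wa$. $(X_\sigma,T)$ is balanced on letters if for each $b\in\mathcal{A}$ there is $C_b$ with $||u|_b-|u'|_b|\le C_b$ for all $u,u'\in\mathcal{L}(X_\sigma)$ of equal length. *)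

From mathcomp Require Import all_boot all_order all_algebra.
Set Implicit Arguments. Unset Strict Implicit. Unset Printing Implicit Defensive.

Section Subst.
Variable A : finType.
Implicit Types (sigma : A -> seq A) (u w : seq A).

Definition subst_word sigma (u : seq A) : seq A := flatten (map sigma u).

Definition subst_iter sigma (n : nat) (a : A) : seq A :=
  iter n (subst_word sigma) [:: a].

Definition non_erasing sigma : Prop := forall a, size (sigma a) != 0.

Definition constant_length sigma (l : nat) : Prop := forall a, size (sigma a) = l.

Definition subst_matrix sigma (a b : A) : nat := count_mem a (sigma b).

Fixpoint mx_pow (M : A -> A -> nat) (k : nat) (a b : A) : nat :=
  match k with
  | 0 => (a == b : nat)
  | k'.+1 => \sum_(c : A) M a c * mx_pow M k' c b
  end.

Definition primitive sigma : Prop :=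
  exists k, forall a b, 0 < mx_pow (subst_matrix sigma) k a b.

Definition symmetric_matrix (M : A -> A -> nat) : Prop := forall a b, M a b = M b a.

Definition factor_at (x : int -> A) (i : int) (n : nat) : seq A :=
  [seq x (i + k%:Z)%R | k <- iota 0 n].

Definition in_subst_lang sigma u : Prop :=
  exists n a, infix u (subst_iter sigma n a).

Definition X_sigma sigma (x : int -> A) : Prop :=
  forall i n, in_subst_lang sigma (factor_at x i n).

Definition lang_X sigma u : Prop :=
  exists x, X_sigma sigma x /\ exists i, u = factor_at x i (size u).

Definition return_word sigma (a : A) w : Prop :=
  lang_X sigma (rcons w a) /\ prefix [:: a] (rcons w a).

Definition balanced_on_letters sigma : Prop :=
  forall b : A, exists C : nat, forall u u',
    lang_X sigma u -> lang_X sigma u' -> size u = size u' ->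
    (count_mem b u - count_mem b u' <= C) /\ (count_mem b u' - count_mem b u <= C).

End Subst.

(* Symmetry of M_sigma makes its column sums equal to l, so the words sigma^n(c), c in A,
   together contain exactly l^n letters b.  Comparing with them, and cutting long factors into
   blocks, balancedness bounds the discrepancy #|A| |u|_b - |u| on the language, which then
   attains a maximum at some u1 and a minimum at some u2.  Write the return word as a w' and take
   n so large that u1 and u2 occur in T = sigma^n(a); with S = sigma^n(w'), the factor T S T
   contains, for each factor u of T, a rotation of T S u.  Extremality of u1 and u2 forces the
   discrepancy of T S to vanish, so #|A| divides |T S| = l^n |w|, hence l^n, contradicting the
   arithmetic hypotheses. *)

From mathcomp Require Import all_boot all_order all_algebra.
From mathcomp Require Import zify.
From Stdlib Require Import Classical.
Set Implicit Arguments. Unset Strict Implicit. Unset Printing Implicit Defensive.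

Import Order.TTheory GRing.Theory Num.Theory.

Lemma sum_count_mem (T : finType) (s : seq T) : \sum_(e : T) count_mem e s = size s.
Proof.
elim: s => [|x s IHs] /=; first by rewrite big1.
by rewrite big_split /= IHs -big_mkcond /= (big_pred1 x) // => y; rewrite /= eq_sym.
Qed.

Lemma exists_max_int (T : Type) (P : T -> Prop) (f : T -> int) (B : int) :
  (exists u, P u) -> (forall u, P u -> (f u <= B)%R) ->
  exists2 u, P u & forall v, P v -> (f v <= f u)%R.
Proof.
move=> [u0 Pu0] f_le_B; apply: NNPP => no_max.
have climb n : exists2 u, P u & (f u0 + n%:Z <= f u)%R.
  elim: n => [|n [u Pu le_u]]; first by exists u0; rewrite ?addr0.
  have [v [Pv lt_uv]] : exists v, P v /\ (f u < f v)%R.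
    apply: NNPP => no_v; apply: no_max; exists u => // v Pv.
    by rewrite leNgt; apply/negP => lt_uv; apply: no_v; exists v.
  by exists v => //; lia.
have [u Pu] := climb `|B - f u0|.+1; have := f_le_B u Pu; lia.
Qed.

Lemma exists_min_int (T : Type) (P : T -> Prop) (f : T -> int) (B : int) :
  (exists u, P u) -> (forall u, P u -> (B <= f u)%R) ->
  exists2 u, P u & forall v, P v -> (f u <= f v)%R.
Proof.
move=> P_ne B_le_f.
have [|u Pu u_max] := @exists_max_int T P (fun u => - f u)%R (- B)%R P_ne.
  by move=> u /B_le_f; rewrite lerN2.
by exists u => // v /u_max; rewrite lerN2.
Qed.

Section SubstWord.
Variables (A : finType) (sigma : A -> seq A).
Local Notation sw := (subst_word sigma).
Local Notation M := (subst_matrix sigma).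

Lemma subst_word_cat u v : sw (u ++ v) = sw u ++ sw v.
Proof. by rewrite /subst_word map_cat flatten_cat. Qed.

Lemma iter_subst_word_cat n u v : iter n sw (u ++ v) = iter n sw u ++ iter n sw v.
Proof. by elim: n => //= n ->; rewrite subst_word_cat. Qed.

Lemma infix_iter_subst_word n u v : infix u v -> infix (iter n sw u) (iter n sw v).
Proof. by move=> /infixP [p [q ->]]; rewrite !iter_subst_word_cat infix_infix. Qed.

Lemma infix_subst_iter n c v : c \in v -> infix (subst_iter sigma n c) (iter n sw v).
Proof.
by move=> /splitPr [p q]; rewrite -cat1s !iter_subst_word_cat infix_infix.
Qed.

Lemma count_subst_word a u : count_mem a (sw u) = \sum_(c : A) M a c * count_mem c u.
Proof.
elim: u => [|x u IHu] /=; first by rewrite big1 // => c _; rewrite muln0.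
rewrite count_cat IHu.
under [RHS]eq_bigr do rewrite mulnDr.
rewrite big_split /=; congr (_ + _).
rewrite (bigD1 x) //= eqxx muln1 big1 ?addn0 // => c.
by rewrite eq_sym => /negbTE ->; rewrite muln0.
Qed.

Lemma count_subst_iter a n b : count_mem a (subst_iter sigma n b) = mx_pow M n a b.
Proof.
elim: n a => [|n IHn] a /=; first by rewrite addn0 eq_sym.
by rewrite count_subst_word; apply: eq_bigr => c _; rewrite IHn.
Qed.

Lemma in_subst_lang_infix u v : in_subst_lang sigma v -> infix u v -> in_subst_lang sigma u.
Proof. by move=> [n [c uv]] vw; exists n, c; apply: infix_trans uv. Qed.

Lemma in_subst_lang_subst_word u : in_subst_lang sigma u -> in_subst_lang sigma (sw u).
Proof. by move=> [n [c uv]]; exists n.+1, c; apply: (infix_iter_subst_word 1 uv). Qed.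

End SubstWord.

Section Factors.
Variable A : finType.
Implicit Types (x : int -> A) (i : int).

Lemma size_factor_at x i n : size (factor_at x i n) = n.
Proof. by rewrite size_map size_iota. Qed.

Lemma factor_atD x i m n :
  factor_at x i (m + n) = factor_at x i m ++ factor_at x (i + m%:Z)%R n.
Proof.
rewrite /factor_at iotaD map_cat; congr (_ ++ _).
rewrite add0n -{1}(addn0 m) iotaDl -map_comp; apply: eq_map => k /=.
by rewrite PoszD addrA.
Qed.

Lemma infix_factor_at x i k m n :
  infix (factor_at x (i + k%:Z)%R m) (factor_at x i (k + m + n)).
Proof. by rewrite -addnA !factor_atD infix_infix. Qed.

Lemma count_factor_at_blocks (b : A) x i q r :
  count_mem b (factor_at x i (q * r)) =
  \sum_(0 <= j < q) count_mem b (factor_at x (i + (j * r)%:Z)%R r).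
Proof.
elim: q => [|q IHq]; first by rewrite big_geq.
by rewrite big_nat_recr //= mulSnr factor_atD count_cat IHq.
Qed.

End Factors.

Section Language.
Variables (A : finType) (sigma : A -> seq A).

Lemma lang_X_factor_at x i n : X_sigma sigma x -> lang_X sigma (factor_at x i n).
Proof. by move=> Xx; exists x; split=> //; exists i; rewrite size_factor_at. Qed.

Lemma in_subst_lang_lang_X u : lang_X sigma u -> in_subst_lang sigma u.
Proof. by move=> [x [Xx [i ->]]]. Qed.

Lemma lang_X_infix u v : lang_X sigma v -> infix u v -> lang_X sigma u.
Proof.
move=> [x [Xx [i Ev]]] /infixP [p [q Epuq]]; exists x; split=> //.
exists (i + (size p)%:Z)%R; move/eqP: Ev; rewrite Epuq !size_cat !factor_atD.
rewrite eqseq_cat ?size_factor_at // => /andP [_].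
by rewrite eqseq_cat ?size_factor_at // => /andP [/eqP].
Qed.

End Language.

Section ConstantLength.
Variables (A : finType) (sigma : A -> seq A) (l : nat).
Hypothesis sigma_l : constant_length sigma l.
Local Notation sw := (subst_word sigma).

Lemma size_subst_word u : size (sw u) = l * size u.
Proof.
elim: u => [|c u IHu]; first by rewrite muln0.
by rewrite /subst_word /= size_cat -/(sw u) IHu sigma_l mulnS.
Qed.

Lemma size_iter_subst_word n u : size (iter n sw u) = l ^ n * size u.
Proof. by elim: n => [|n IHn] /=; rewrite ?mul1n // size_subst_word IHn expnS mulnA. Qed.

Lemma size_subst_iter n c : size (subst_iter sigma n c) = l ^ n.
Proof. by rewrite size_iter_subst_word muln1. Qed.

(* Symmetry turns the column sums of M_sigma into its row sums |sigma(b)| = l. *)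
Lemma sum_count_subst_iter b n : symmetric_matrix (subst_matrix sigma) ->
  \sum_(c : A) count_mem b (subst_iter sigma n c) = l ^ n.
Proof.
move=> sigma_sym; elim: n b => [|n IHn] b.
  by rewrite (bigD1 b) //= eqxx big1 // => c /negbTE; rewrite /= => ->.
rewrite (eq_bigr (fun c => \sum_(e : A) subst_matrix sigma b e *
                            count_mem e (subst_iter sigma n c))); last first.
  by move=> c _; apply: count_subst_word.
rewrite exchange_big /=; under eq_bigr do rewrite -big_distrr /= IHn.
rewrite -big_distrl /= expnSr mulnC; congr (_ * _).
under eq_bigr do rewrite sigma_sym.
by rewrite sum_count_mem sigma_l.
Qed.

Hypothesis l_gt0 : 0 < l.

(* The point sigma(x), with the block sigma(x_i) at positions i l, ..., i l + l - 1;
   [x 0] is only a default for [nth]. *)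
Definition subst_point (x : int -> A) (k : int) : A :=
  nth (x 0%R) (sigma (x (k %/ l%:Z)%Z)) `|(k %% l%:Z)%Z|%N.

Lemma factor_at_subst_point x i n :
  factor_at (subst_point x) (i * l%:Z)%R (n * l) = sw (factor_at x i n).
Proof.
have lZ_neq0 : (l%:Z != 0)%R by rewrite eqz_nat -lt0n.
have block j : factor_at (subst_point x) (j * l%:Z)%R l = sigma (x j).
  rewrite /factor_at -[RHS](mkseq_nth (x 0%R)) sigma_l /mkseq.
  apply/eq_in_map => k; rewrite mem_iota add0n => /andP [_ kl].
  have k_range : (0 <= k%:Z < l%:Z)%R by rewrite ltz_nat kl.
  by rewrite /subst_point divzMDl // divz_small // addr0 modzMDl modz_small.
elim: n i => [|n IHn] i //.
rewrite mulSn factor_atD block.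
have -> : (i * l%:Z + l%:Z = (i + 1) * l%:Z)%R by rewrite mulrDl mul1r.
by rewrite IHn -add1n factor_atD /factor_at /= addr0.
Qed.

Lemma X_sigma_subst_point x : X_sigma sigma x -> X_sigma sigma (subst_point x).
Proof.
move=> Xx i n.
have lZ_neq0 : (l%:Z != 0)%R by rewrite eqz_nat -lt0n.
set q := (i %/ l%:Z)%Z; set r := `|(i %% l%:Z)%Z|%N.
have Ei : i = (q * l%:Z + r%:Z)%R by rewrite gez0_abs ?modz_ge0 // -divz_eq.
have r_lt_l : r < l by rewrite -ltz_nat gez0_abs ?modz_ge0 // ltz_pmod.
apply: (in_subst_lang_infix (in_subst_lang_subst_word (Xx q n.+1))).
rewrite -factor_at_subst_point Ei.
have -> : n.+1 * l = r + n + (n.+1 * l - (r + n)).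
  by rewrite subnKC // mulSn leq_add ?(ltnW r_lt_l) ?leq_pmulr.
exact: infix_factor_at.
Qed.

Lemma lang_X_subst_word u : lang_X sigma u -> lang_X sigma (sw u).
Proof.
move=> [x [Xx [i ->]]]; rewrite -factor_at_subst_point.
exact/lang_X_factor_at/X_sigma_subst_point.
Qed.

Lemma lang_X_iter_subst_word n u : lang_X sigma u -> lang_X sigma (iter n sw u).
Proof. by move=> Lu; elim: n => //= n; apply: lang_X_subst_word. Qed.

End ConstantLength.

Section Primitive.
Variables (A : finType) (sigma : A -> seq A) (l k : nat).
Hypotheses (sigma_l : constant_length sigma l) (l_gt0 : 0 < l).
Hypothesis sigma_k : forall a b, 0 < mx_pow (subst_matrix sigma) k a b.
Local Notation sw := (subst_word sigma).

Lemma mem_subst_iter_primitive c e : c \in subst_iter sigma k e.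
Proof. by rewrite -has_pred1 has_count count_subst_iter. Qed.

Lemma one_lt_length : 1 < #|A| -> 1 < l.
Proof.
move=> A_gt1; have [e _] := card_gt0P (ltnW A_gt1).
rewrite ltnNge; apply: contraL A_gt1 => l_le1; rewrite -leqNgt.
have l1 : l = 1 by apply/eqP; rewrite eqn_leq l_le1 l_gt0.
rewrite -(exp1n k) -l1 -(size_subst_iter sigma_l k e) -sum_count_mem -sum1_card.
by apply: leq_sum => c _; rewrite -has_count has_pred1 mem_subst_iter_primitive.
Qed.

Lemma lang_X_subst_iter x n c : X_sigma sigma x -> lang_X sigma (subst_iter sigma n c).
Proof.
move=> Xx; have Lx0 : lang_X sigma [:: x 0%R].
  by have := lang_X_factor_at 0 1 Xx; rewrite /factor_at /= addr0.
apply: (lang_X_infix (lang_X_iter_subst_word sigma_l l_gt0 (n + k) Lx0)).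
by rewrite iterD; apply/infix_subst_iter/mem_subst_iter_primitive.
Qed.

Lemma infix_subst_iter_eventually u a : in_subst_lang sigma u ->
  exists n0, forall n, n0 <= n -> infix u (subst_iter sigma n a).
Proof.
move=> [t [c u_tc]]; exists (t + k) => n le_tk_n.
have [e e_in] : exists e, e \in subst_iter sigma (n - (t + k)) a.
  exists (nth a (subst_iter sigma (n - (t + k)) a) 0).
  by rewrite mem_nth // (size_subst_iter sigma_l) expn_gt0 l_gt0.
have c_e := infix_subst_iter sigma t (mem_subst_iter_primitive c e).
rewrite -iterD in c_e; apply: (infix_trans u_tc (infix_trans c_e _)).
have -> : subst_iter sigma n a = iter (t + k) sw (subst_iter sigma (n - (t + k)) a).
  by rewrite /subst_iter -iterD subnKC.
exact: infix_subst_iter.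
Qed.

End Primitive.

Section Discrepancy.
Variables (A : finType) (b : A).

Definition discrepancy (u : seq A) : int := ((#|A| * count_mem b u)%:Z - (size u)%:Z)%R.

Lemma discrepancy_cat u v : discrepancy (u ++ v) = (discrepancy u + discrepancy v)%R.
Proof. rewrite /discrepancy count_cat size_cat; lia. Qed.

Lemma perm_discrepancy u v : perm_eq u v -> discrepancy u = discrepancy v.
Proof. by move=> uv; rewrite /discrepancy (perm_size uv) (permP uv). Qed.

Lemma dvdn_size_discrepancy0 u : discrepancy u = 0%R -> #|A| %| size u.
Proof. by rewrite /discrepancy => disc0; apply/dvdnP; exists (count_mem b u); lia. Qed.

End Discrepancy.

Section Balance.
Variables (A : finType) (sigma : A -> seq A) (l k : nat).
Hypotheses (sigma_l : constant_length sigma l) (l_gt1 : 1 < l).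
Hypothesis sigma_sym : symmetric_matrix (subst_matrix sigma).
Hypothesis sigma_k : forall a b, 0 < mx_pow (subst_matrix sigma) k a b.
Variables (x : int -> A) (b : A) (C : nat).
Hypothesis Xx : X_sigma sigma x.
Hypothesis b_balanced : forall u u',
  lang_X sigma u -> lang_X sigma u' -> size u = size u' ->
  (count_mem b u - count_mem b u' <= C) /\ (count_mem b u' - count_mem b u <= C).
Local Notation d := #|A|.
Local Notation cnt := (count_mem b).

Let l_gt0 : 0 < l. Proof. exact: ltnW. Qed.

Lemma count_le_balanced u u' :
  lang_X sigma u -> lang_X sigma u' -> size u = size u' -> cnt u <= cnt u' + C.
Proof. by move=> Lu Lu' Suu'; rewrite -leq_subLR; case: (b_balanced Lu Lu' Suu'). Qed.

Lemma count_bounds_pow n u : lang_X sigma u -> size u = l ^ n ->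
  l ^ n <= d * cnt u + d * C /\ d * cnt u <= l ^ n + d * C.
Proof.
move=> Lu Su.
have Lc c : lang_X sigma (subst_iter sigma n c) := lang_X_subst_iter sigma_l l_gt0 sigma_k n c Xx.
have Sc c : size (subst_iter sigma n c) = size u by rewrite Su (size_subst_iter sigma_l).
rewrite -mulnDr -(sum_count_subst_iter sigma_l b n sigma_sym) -!sum_nat_const; split.
  by apply: leq_sum => c _; apply: count_le_balanced.
by rewrite -big_split; apply: leq_sum => c _; apply: count_le_balanced.
Qed.

Lemma count_bounds u : lang_X sigma u ->
  size u <= d * cnt u + 2 * d * C /\ d * cnt u <= size u + 2 * d * C.
Proof.
move=> Lu; set m := size u; set L := l ^ m.
have m_lt_L : m < L := ltn_expl m l_gt1.
have sumK K q : \sum_(0 <= j < q) K = q * K by rewrite sum_nat_const_nat subn0.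
(* Count b in a factor V of length m l^m in two ways: as m blocks of length l^m and as l^m
   blocks of length m. *)
set V := factor_at x 0 (m * L).
have [V_ge V_le] : m * L <= d * cnt V + m * (d * C) /\ d * cnt V <= m * (L + d * C).
  rewrite /V count_factor_at_blocks big_distrr /= -(sumK L) -(sumK (d * C)) -(sumK (_ + _)).
  split; rewrite -?big_split; apply: leq_sum => j _;
    have [] := count_bounds_pow (lang_X_factor_at (0 + (j * L)%:Z)%R L Xx) (size_factor_at _ _ L);
    by rewrite -/L.
have [V_ge' V_le'] : L * cnt u <= cnt V + L * C /\ cnt V <= L * (cnt u + C).
  rewrite /V [m * L]mulnC count_factor_at_blocks.
  rewrite -(sumK (cnt u) L) -(sumK C L) -(sumK (_ + C) L).
  split; rewrite -?big_split; apply: leq_sum => j _; apply: count_le_balanced => //;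
    by rewrite ?size_factor_at //; apply: lang_X_factor_at.
have dV_le := leq_mul (leqnn d) V_le'; have dV_ge := leq_mul (leqnn d) V_ge'.
have mdC := leq_mul (ltnW m_lt_L) (leqnn (d * C)).
by split; rewrite -(leq_pmul2l (leq_ltn_trans (leq0n m) m_lt_L)); lia.
Qed.

Lemma discrepancy_bounded u : lang_X sigma u -> (`|discrepancy b u| <= (2 * d * C)%:Z)%R.
Proof. by move/count_bounds; rewrite /discrepancy; lia. Qed.

End Balance.

Lemma lang_X_rotate (A : finType) (sigma : A -> seq A) u s t :
  lang_X sigma (t ++ s ++ t) -> infix u t ->
  exists2 z, lang_X sigma z & perm_eq z ((t ++ s) ++ u).
Proof.
move=> Ltst /infixP [p [q Et]]; exists (u ++ q ++ s ++ p ++ u).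
  apply: (lang_X_infix Ltst); rewrite Et.
  have -> : (p ++ u ++ q) ++ s ++ p ++ u ++ q = p ++ (u ++ q ++ s ++ p ++ u) ++ q by rewrite !catA.
  exact: infix_infix.
by apply/permP => P; rewrite Et !count_cat; lia.
Qed.

Lemma discrepancy_period_eq0 (A : finType) (sigma : A -> seq A) (b : A) u1 u2 s t :
  (forall v, lang_X sigma v -> (discrepancy b v <= discrepancy b u1)%R) ->
  (forall v, lang_X sigma v -> (discrepancy b u2 <= discrepancy b v)%R) ->
  lang_X sigma (t ++ s ++ t) -> infix u1 t -> infix u2 t ->
  discrepancy b (t ++ s) = 0%R.
Proof.
move=> u1_max u2_min Ltst u1_t u2_t.
have [z1 /u1_max z1_le /(perm_discrepancy b) Ez1] := lang_X_rotate Ltst u1_t.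
have [z2 /u2_min z2_ge /(perm_discrepancy b) Ez2] := lang_X_rotate Ltst u2_t.
by move: z1_le z2_ge; rewrite Ez1 Ez2 !discrepancy_cat; lia.
Qed.

Lemma coprime_ndvd_expn d l n : 1 < d -> coprime d l -> ~~ (d %| l ^ n).
Proof.
move=> d_gt1 /(coprimeXr n) dl; apply/negP => /coprime_dvdr/(_ dl).
by rewrite /coprime gcdnn => /eqP d1; rewrite d1 in d_gt1.
Qed.

Theorem corollary4p11 (A : finType) (sigma : A -> seq A) (l : nat) :
  1 < #|A| ->
  non_erasing sigma ->
  primitive sigma ->
  constant_length sigma l ->
  symmetric_matrix (subst_matrix sigma) ->
  (coprime #|A| l \/ exists N, forall n, N <= n -> ~~ (#|A| %| l ^ n)) ->
  (exists (a : A) (w : seq A), w != [::] /\ return_word sigma a w /\ coprime #|A| (size w)) ->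
  ~ balanced_on_letters sigma.
Proof.
move=> A_gt1 sigma_ne [k sigma_k] sigma_l sigma_sym l_cond.
move=> [a [w [w_ne [[Lwa a_pre] cop_w]]]] balanced.
case: w w_ne Lwa a_pre cop_w => [//|c w _ Lawa /andP [/eqP a_c _] cop_w]; subst c.
have l_gt0 : 0 < l by rewrite -(sigma_l a) lt0n sigma_ne.
have l_gt1 := one_lt_length sigma_l l_gt0 sigma_k A_gt1.
have [x [Xx _]] := Lawa.
have [C /(discrepancy_bounded sigma_l l_gt1 sigma_sym sigma_k Xx) bound] := balanced a.
have L_ne : exists u, lang_X sigma u by exists (rcons (a :: w) a).
have [u1 Lu1 u1_max] := exists_max_int L_ne (fun u Lu => ler_normlW (bound u Lu)).
have [u2 Lu2 u2_min] := exists_min_int L_ne (fun u Lu => lerNnormlW (bound u Lu)).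
have [N ndvd] : exists N, forall n, N <= n -> ~~ (#|A| %| l ^ n).
  by case: l_cond => [cop | //]; exists 0 => n _; apply: coprime_ndvd_expn.
have [n1 u1_in] := infix_subst_iter_eventually sigma_l l_gt0 sigma_k a (in_subst_lang_lang_X Lu1).
have [n2 u2_in] := infix_subst_iter_eventually sigma_l l_gt0 sigma_k a (in_subst_lang_lang_X Lu2).
pose n := n1 + n2 + N.
have [n1_n n2_n N_n] : [/\ n1 <= n, n2 <= n & N <= n] by split; rewrite /n; lia.
have Lawa_n := lang_X_iter_subst_word sigma_l l_gt0 n Lawa.
rewrite -cat1s -cats1 !iter_subst_word_cat -catA in Lawa_n.
have := discrepancy_period_eq0 u1_max u2_min Lawa_n (u1_in n n1_n) (u2_in n n2_n).
rewrite -iter_subst_word_cat => /dvdn_size_discrepancy0.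
by rewrite (size_iter_subst_word sigma_l) Gauss_dvdl // (negbTE (ndvd n N_n)).
Qed.
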